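(* Let $G=(V,E)$ be a connected graph, let $(C,+)$ be an Abelian group, and let $c\colon V\to C$ be a distinguishing vertex colouring. Let $c'$ be the canonical edge colouring $c'(uv)=c(u)+c(v)$. If $\gamma$ is a non-trivial automorphism of $G$ preserving $c'$, then $c(\gamma(v))\neq c(v)$ for every vertex $v\in V$. In particular, such $\gamma$ fixes no vertex.
   Context: Graphs are simple and may be infinite. An automorphism $\gamma$ preserves a vertex colouring $c$ if $c\circ\gamma=c$, and preserves an edge colouring $c'$ if $c'(\gamma(u)\gamma(v))=c'(uv)$ for all edges $uv$. A colouring is distinguishing if only the identity automorphism preserves it. *)

(* the colour group is an abstract additive abelian group (zmodType).
   Graphs may be infinite, so the vertex set is an arbitrary Type with a
   Prop-valued adjacency relation. *)
From HB Require Import structures.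
From mathcomp Require Import all_boot all_order all_algebra.
Set Implicit Arguments. Unset Strict Implicit. Unset Printing Implicit Defensive.
Import GRing.Theory.
Local Open Scope ring_scope.

Definition simple_graph (V : Type) (adj : V -> V -> Prop) : Prop :=
  (forall u v, adj u v -> adj v u) /\ (forall v, ~ adj v v).

Inductive walk (V : Type) (adj : V -> V -> Prop) : V -> V -> Prop :=
  | walk_refl : forall v, walk adj v v
  | walk_step : forall u v w, adj u v -> walk adj v w -> walk adj u w.

Definition connected (V : Type) (adj : V -> V -> Prop) : Prop :=
  forall u v : V, walk adj u v.

Definition is_automorphism (V : Type) (adj : V -> V -> Prop) (g : V -> V) : Prop :=
  (exists h : V -> V, (forall v, h (g v) = v) /\ (forall v, g (h v) = v)) /\
  (forall u v, adj u v <-> adj (g u) (g v)).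

Definition preserves_vertex_colouring (V C : Type) (g : V -> V) (c : V -> C) : Prop :=
  forall v, c (g v) = c v.

(* Edge colourings are given as functions on ordered pairs, used only on edges
   (symmetric in the case of interest). *)
Definition preserves_edge_colouring (V C : Type) (adj : V -> V -> Prop)
    (g : V -> V) (c' : V -> V -> C) : Prop :=
  forall u v, adj u v -> c' (g u) (g v) = c' u v.

Definition distinguishing_vertex (V C : Type) (adj : V -> V -> Prop) (c : V -> C) : Prop :=
  forall g : V -> V, is_automorphism adj g -> preserves_vertex_colouring g c ->
    forall v, g v = v.

Definition canonical_edge_colouring (V : Type) (C : zmodType) (c : V -> C) : V -> V -> C :=
  fun u v => c u + c v.

From mathcomp Require Import all_boot all_order all_algebra.
Set Implicit Arguments. Unset Strict Implicit. Unset Printing Implicit Defensive.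
Import GRing.Theory.
Local Open Scope ring_scope.

(* If [g] preserves the canonical edge colouring and [c (g u) = c u], then for
   every edge [uv] cancelling [c u] in [c (g u) + c (g v) = c u + c v] gives
   [c (g v) = c v]; along walks this spreads over the whole connected graph, so
   [g] preserves [c] and is the identity because [c] is distinguishing. *)

Section CanonicalEdgeColouring.

Variables (V : Type) (adj : V -> V -> Prop) (C : zmodType).
Variables (c : V -> C) (g : V -> V).
Hypothesis g_pres : preserves_edge_colouring adj g (canonical_edge_colouring c).

Lemma colour_fixed_adj {u v} : adj u v -> c (g u) = c u -> c (g v) = c v.
Proof.
move=> uv gu; apply: (@addrI _ (c u)).
by have := g_pres uv; rewrite /canonical_edge_colouring gu.
Qed.

Lemma colour_fixed_walk u v : walk adj u v -> c (g u) = c u -> c (g v) = c v.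
Proof. by elim=> // a b w ab _ IH /(colour_fixed_adj ab). Qed.

Lemma colour_fixed_preserves_vertex_colouring u :
  connected adj -> c (g u) = c u -> preserves_vertex_colouring g c.
Proof. by move=> conn gu v; apply: colour_fixed_walk (conn u v) gu. Qed.

End CanonicalEdgeColouring.

Theorem mainTheorem4 (V : Type) (adj : V -> V -> Prop) (C : zmodType) (c : V -> C)
  (Hsimple : simple_graph adj) (Hconn : connected adj)
  (Hdist : distinguishing_vertex adj c)
  (g : V -> V) (Hg : is_automorphism adj g) (Hnontriv : exists v, g v <> v)
  (Hpres : preserves_edge_colouring adj g (canonical_edge_colouring c)) :
  (forall v, c (g v) <> c v) /\ (forall v, g v <> v).
Proof.
have colour_moved v : c (g v) <> c v.
  move=> gv; case: Hnontriv => x; apply.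
  exact: Hdist g Hg (colour_fixed_preserves_vertex_colouring Hpres Hconn gv) x.
by split=> // v gv; apply: (colour_moved v); rewrite gv.
Qed.
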